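(* For the merging problem with $n$ items and $k\le n$ slots (with $a_i\ge 0$ almost surely and $o_i\ge 0$, and arbitrary, not necessarily identical, distributions $G_i$), the G-CHANGE mechanism is $1/2$-approximate: $\mathrm{OBJ}(\mathcal M^C)\ge\frac12\mathrm{OBJ}(\mathcal M^* )$.
   Context: Merging problem: $n$ items indexed by $[n]$, $k\le n$ slots. Each item $i$ has a random ad value $a_i$, drawn independently from a regular distribution $G_i$ ($\boldsymbol a\sim G=\times_i G_i$), and a fixed organic value $o_i\ge0$. A mechanism is a pair of allocation rules $x,y$ with $x_i(\boldsymbol a),y_i(\boldsymbol a)\in\{0,1\}$ ($x_i=1$: item $i$ shown as ad; $y_i=1$: shown organically) satisfying for all $\boldsymbol a,i$: (i) $\sum_i(x_i+y_i)\le k$; (ii) $x_i+y_i\le 1$; (iii) $y_i(a_i,\boldsymbol a_{-i})$ independent of $a_i$; (iv) $x_i(a_i,\boldsymbol a_{-i})$ non-decreasing in $a_i$. Objective $\mathrm{OBJ}=\mathbb E_{\boldsymbol a\sim G}[\sum_i(a_ix_i(\boldsymbol a)+o_iy_i(\boldsymbol a))]$; $\mathcal M^*$ maximizes it subject to (i)–(iv). A mechanism $\mathcal M$ is $\tau$-approximate if $\mathrm{OBJ}(\mathcal M)/\mathrm{OBJ}(\mathcal M^* )\ge\tau$. Notation: $\max^{(m)}S$ is the sum of the $m$ largest elements of a finite multiset $S$ ($\max^{(0)}S=0$); $\mathbb E_{a_j}[\cdot]$ denotes expectation over $a_j\sim G_j$ only, the other coordinates held fixed. G-CHANGE-$I$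 mechanism $\mathcal M^C_I$, for an ordered list $I=(i_1,\dots,i_k)$ of distinct items: for $t\in[k]$ let $R_t=\sum_{j=1}^{t-1}o_{i_j}+\max^{(k-t)}\{a_i: i\notin\{i_1,\dots,i_t\}\}$, and define recursively $w_{i_1}^{\boldsymbol a}=\mathbb E_{a_{i_1}}[\max^{(k)}\{a_1,\dots,a_n\}]-R_1$ and, for $t>1$, $w_{i_t}^{\boldsymbol a}=\mathbb E_{a_{i_t}}[\max\{o_{i_{t-1}}+R_{t-1},\,w_{i_{t-1}}^{\boldsymbol a}+R_{t-1}\}]-R_t$. Let $s^*$ be the largest $s\in[k]$ with $o_{i_s}\ge w_{i_s}^{\boldsymbol a}$ and $o_{i_t}<w_{i_t}^{\boldsymbol a}$ for all $t>s$ (and $s^*=0$ if none). The mechanism shows $i_1,\dots,i_{s^*}$ in organic form and shows as ads the $k-s^*$ items outside $\{i_1,\dots,i_{s^*}\}$ with the largest $a_i$. Its objective is $\mathrm{OBJ}(\mathcal M^C_I)=\mathbb E_{\boldsymbol a\sim G}\big[\max\{\sum_{j=1}^k o_{i_j},\ w_{i_k}^{\boldsymbol a}+\sum_{j=1}^{k-1}o_{i_j}\}\big]$. The G-CHANGE mechanism $\mathcal M^C$ runs the $\mathcal M^C_I$ of highest objective over all ordered lists $I$ of $k$ distinct items of $[n]$, so $\mathrm{OBJ}(\mathcal M^C)=\max_I\mathrm{OBJ}(\mathcal M^C_I)$. *)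

From HB Require Import structures.
From mathcomp Require Import all_boot all_order all_algebra.
From mathcomp Require Import all_classical all_reals all_analysis.

Set Implicit Arguments.
Unset Strict Implicit.
Unset Printing Implicit Defensive.

Import Order.TTheory GRing.Theory Num.Theory.
Local Open Scope ring_scope.
Local Open Scope classical_set_scope.
Local Open Scope ereal_scope.

Section Merging.
Variables (R : realType) (n k : nat).
Variables (G : 'I_n -> probability R R) (o : 'I_n -> R).

(* A profile of ad values a = (a_1,...,a_n), as an n-tuple (measurable
   space with the product sigma-algebra generated by the coordinates). *)
Definition vec := n.-tuple R.

Definition set_coord (a : vec) (j : 'I_n) (t : R) : vec :=
  [tuple (if i == j then t else tnth a i) | i < n].

Definition topsum (m : nat) (s : seq R) : R :=
  (\sum_(x <- take m (sort (fun x y : R => y <= x) s)) x)%R.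

Definition Ecoord (j : 'I_n) (F : vec -> \bar R) (a : vec) : \bar R :=
  \int[G j]_(t in [set: R]) F (set_coord a j t).

(* E_{a ~ G}[F], G = product of the G_i : iterated integral over all the
   coordinates (equal to the product-measure integral by Fubini-Tonelli) *)
Definition Eprod (F : vec -> \bar R) : \bar R :=
  foldr (fun j acc => Ecoord j acc) F (enum 'I_n) [tuple (0:R)%R | _ < n].

Definition feasible (x y : 'I_n -> vec -> bool) : Prop :=
  [/\ forall a, (\sum_(i < n) (x i a + y i a) <= k)%N,
      forall a i, (x i a + y i a <= 1)%N,
      forall a i t, y i (set_coord a i t) = y i a,
      forall a i t t', (t <= t')%R -> x i (set_coord a i t) ==> x i (set_coord a i t')
    & forall i, measurable [set a : vec | x i a] /\ measurable [set a : vec | y i a]].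

Definition OBJ (x y : 'I_n -> vec -> bool) : \bar R :=
  Eprod (fun a => (\sum_(i < n) (tnth a i * (x i a)%:R + o i * (y i a)%:R))%R%:E).

(* G-CHANGE-I, for an ordered list I = (i_1,...,i_k); everything below is
   0-indexed: item number s (0 <= s < k) is i_{s+1} = nth d I s. *)
Section GChangeI.
Variables (I : seq 'I_n) (d : 'I_n).

Definition Rt (s : nat) (a : vec) : R :=
  (\sum_(i <- take s I) o i +
   topsum (k - s.+1) [seq tnth a i | i <- enum 'I_n & i \notin take s.+1 I])%R.

Fixpoint w (s : nat) : vec -> \bar R :=
  match s with
  | 0 => fun a =>
      Ecoord (nth d I 0) (fun b => (topsum k [seq tnth b i | i <- enum 'I_n])%:E) a
      - (Rt 0 a)%:E
  | s'.+1 => fun a =>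
      Ecoord (nth d I s)
        (fun b => maxe ((o (nth d I s') + Rt s' b)%R%:E) (w s' b + (Rt s' b)%:E)) a
      - (Rt s a)%:E
  end.

End GChangeI.

Definition OBJ_GChangeI (I : seq 'I_n) : \bar R :=
  match I with
  | [::] => 0
  | d :: _ =>
      Eprod (fun a => maxe ((\sum_(i <- I) o i)%R%:E)
                           (w I d k.-1 a + (\sum_(i <- take k.-1 I) o i)%R%:E))
  end.

Definition OBJ_GChange : \bar R :=
  \big[Order.max/-oo]_(I : k.-tuple 'I_n | uniq I) OBJ_GChangeI I.

End Merging.

From HB Require Import structures.
From mathcomp Require Import all_boot all_order all_algebra.
From mathcomp Require Import all_classical all_reals all_analysis.
From mathcomp Require Import measurable_realfun.

(* A feasible mechanism shows at most k items in each profile a.  Its ads are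
   therefore worth at most the sum of the k largest ad values, and its organic
   items at most o(S) for some list S of k distinct items.  G-CHANGE dominates
   both terms: running it on S yields at least o(S), and on a list I of k items
   the quantities [w] telescope, [w_{i_k} + R_k] being at least the expectation
   over a_I of the k largest ad values.  Only the
   slot constraint of feasibility is used; since ad values are a.s.
   nonnegative, every pointwise bound need only hold on nonnegative profiles. *)

Set Implicit Arguments.
Unset Strict Implicit.
Unset Printing Implicit Defensive.

Import Order.TTheory GRing.Theory Num.Theory.
Local Open Scope ring_scope.
Local Open Scope classical_set_scope.
Local Open Scope ereal_scope.

Section integral_nonneg_support.
Variables (R : realType) (mu : probability R R).
Import HBNNSimple.

Lemma sintegral_le_integral (h : {nnsfun R >-> R}) (g : R -> \bar R) :
  (forall x, 0 <= g x) -> (forall x, (h x)%:E <= g x) ->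
  sintegral mu h <= \int[mu]_x g x.
Proof.
by move=> g0 hg; rewrite ge0_integralTE//; apply: ereal_sup_ubound; exists h.
Qed.

Lemma ge0_integral_le_ub (f : R -> \bar R) (M : \bar R) :
  (forall x, 0 <= f x) ->
  (forall h : {nnsfun R >-> R}, (forall x, (h x)%:E <= f x) ->
     sintegral mu h <= M) ->
  \int[mu]_x f x <= M.
Proof.
by move=> f0 fM; rewrite ge0_integralTE//; apply: ge_ereal_sup => _ [h hf <-]; exact: fM.
Qed.

(* No measurability is needed: a nonnegative integral is a supremum over
   simple minorants. *)
Lemma le_ge0_integral (f g : R -> \bar R) :
  (forall x, 0 <= f x) -> (forall x, f x <= g x) ->
  \int[mu]_x f x <= \int[mu]_x g x.
Proof.
move=> f0 fg; apply: ge0_integral_le_ub => // h hf.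
apply: sintegral_le_integral => x; first exact: le_trans (f0 x) (fg x).
exact: le_trans (hf x) (fg x).
Qed.

Hypothesis mu_neg0 : mu [set t : R | t < 0]%R = 0.

Let nonneg_itv : [set t : R | 0 <= t]%R = [set` `[0, +oo[%R].
Proof. by apply/seteqP; split => t /=; rewrite in_itv/= andbT. Qed.

(* As [mu] is carried by [0, +oo), a simple minorant [h] of [f] can be cut
   down to [h * \1_[0, +oo)], a minorant of [g] with the same integral. *)
Lemma ge0_le_integral_on_nonneg (f g : R -> \bar R) :
  (forall x, 0 <= f x) -> (forall x, 0 <= g x) ->
  (forall x, (0 <= x)%R -> f x <= g x) ->
  \int[mu]_x f x <= \int[mu]_x g x.
Proof.
move=> f0 g0 fg; apply: ge0_integral_le_ub => // h hf.
pose hplus t := (h t * \1_[set t : R | 0 <= t]%R t)%R.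
have hplus0 t : (0 <= hplus t)%R by rewrite mulr_ge0// indicE; case: (_ \in _).
have mh : measurable_fun setT (h : R -> R) by exact: measurable_funPT.
have mneg : measurable [set t : R | t < 0]%R.
  rewrite (_ : mkset _ = [set` `]-oo, 0[%R]); first exact: measurable_itv.
  by apply/seteqP; split => t /=; rewrite in_itv.
apply: (@le_trans _ _ (\int[mu]_x (hplus x)%:E)).
  have := integral_nnsfun mu measurableT h; rewrite patch_setT => <-.
  apply: ae_ge0_le_integral => //.
  - by move=> x _; rewrite lee_fin.
  - exact/measurable_EFinP.
  - by move=> x _; rewrite lee_fin.
  - apply/measurable_EFinP; apply: measurable_funM => //.
    by apply: measurable_indic; rewrite nonneg_itv; exact: measurable_itv.
  - exists [set t : R | t < 0]%R; split => // t /=.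
    apply: contra_notP => /negP; rewrite -leNgt => t0 _.
    by rewrite /hplus indicE mem_set// mulr1.
apply: le_ge0_integral => [x|x]; first by rewrite lee_fin.
rewrite /hplus indicE; case: (boolP (x \in _)) => [/set_mem x0|_].
  by rewrite mulr1; exact: le_trans (hf x) (fg x x0).
by rewrite mulr0; exact: g0.
Qed.

Lemma le_integral_on_nonneg (f g : R -> \bar R) :
  (forall x, (0 <= x)%R -> f x <= g x) ->
  \int[mu]_x f x <= \int[mu]_x g x.
Proof.
move=> fg; rewrite (integralE _ _ f) (integralE _ _ g); apply: leeB.
  apply: ge0_le_integral_on_nonneg => [x|x|x x0]; rewrite ?funepos_ge0//.
  apply: (@funepos_le _ _ [set x : R | 0 <= x]%R); last exact/mem_set.
  by move=> z /set_mem; exact: fg.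
apply: ge0_le_integral_on_nonneg => [x|x|x x0]; rewrite ?funeneg_ge0//.
apply: (@funeneg_le _ _ [set x : R | 0 <= x]%R); last exact/mem_set.
by move=> z /set_mem; exact: fg.
Qed.

Lemma integralDr_le (f : R -> \bar R) (c : R) : (0 <= c)%R ->
  (forall x, (0 <= x)%R -> 0 <= f x) ->
  \int[mu]_x (f x + c%:E) <= \int[mu]_x f x + c%:E.
Proof.
move=> c0 f0.
(* setting [f] to 0 on the negative reals changes neither integral *)
pose fplus x := if (0 <= x)%R then f x else 0.
have fplus0 x : 0 <= fplus x by rewrite /fplus; case: ifPn => // /f0.
apply: (@le_trans _ _ (\int[mu]_x (fplus x + c%:E))).
  by apply: le_integral_on_nonneg => x x0; rewrite /fplus x0.
apply: (@le_trans _ _ (\int[mu]_x fplus x + c%:E)); last first.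
  by rewrite leeD2r// le_integral_on_nonneg// => x x0; rewrite /fplus x0.
apply: ge0_integral_le_ub => [x|h hf]; first by rewrite adde_ge0.
(* split a simple minorant [h] of [fplus + c] as [max(h - c, 0) + c] *)
pose hc x := Num.max (h x - c)%R 0%R.
have hc0 x : (0 <= hc x)%R by rewrite le_max lexx orbT.
have mh : measurable_fun setT (h : R -> R) by exact: measurable_funPT.
have mhc : measurable_fun setT hc by apply: measurable_maxr => //; exact: measurable_funB.
have := integral_nnsfun mu measurableT h; rewrite patch_setT => <-.
apply: (@le_trans _ _ (\int[mu]_x ((hc x)%:E + (cst c%:E) x))).
  apply: le_ge0_integral => x; first by rewrite lee_fin.
  by rewrite /= -EFinD lee_fin -lerBlDr le_max lexx.
rewrite ge0_integralD//; last 2 first.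
- by move=> x _; rewrite lee_fin.
- exact/measurable_EFinP.
rewrite integral_cst// [X in (_ * X)%E]probability_setT mule1.
rewrite leeD2r// le_ge0_integral// => x.
by rewrite EFin_max ge_max fplus0 EFinB leeBlDr// andbT.
Qed.

End integral_nonneg_support.

Section coordinate_expectation.
Variables (R : realType) (n : nat) (G : 'I_n -> probability R R).
Hypothesis G_neg0 : forall i, G i [set t : R | t < 0]%R = 0.

Definition nonneg_vec (a : vec R n) := forall i, (0 <= tnth a i)%R.

Definition free_of (j : 'I_n) (F : vec R n -> \bar R) :=
  forall a t, F (set_coord a j t) = F a.

Lemma tnth_set_coord (a : vec R n) j t i :
  tnth (set_coord a j t) i = if i == j then t else tnth a i.
Proof. by rewrite tnth_mktuple. Qed.

Lemma set_coord2 (a : vec R n) j t s :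
  set_coord (set_coord a j t) j s = set_coord a j s.
Proof. by apply: eq_from_tnth => i; rewrite !tnth_set_coord; case: (i == j). Qed.

Lemma set_coordC (a : vec R n) j l t s : j != l ->
  set_coord (set_coord a l t) j s = set_coord (set_coord a j s) l t.
Proof.
move=> jl; apply: eq_from_tnth => i; rewrite !tnth_set_coord.
by case: (eqVneq i j) => [->|//]; rewrite (negbTE jl).
Qed.

Lemma nonneg_set_coord (a : vec R n) j t :
  nonneg_vec a -> (0 <= t)%R -> nonneg_vec (set_coord a j t).
Proof. by move=> a0 t0 i; rewrite tnth_set_coord; case: (i == j). Qed.

Section one_coordinate.
Variables (j : 'I_n) (F F' : vec R n -> \bar R).

Lemma le_Ecoord : (forall a, nonneg_vec a -> F a <= F' a) ->
  forall a, nonneg_vec a -> Ecoord G j F a <= Ecoord G j F' a.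
Proof.
move=> FF' a a0; apply: le_integral_on_nonneg => // t t0.
exact/FF'/nonneg_set_coord.
Qed.

Lemma Ecoord_ge0 : (forall a, nonneg_vec a -> 0 <= F a) ->
  forall a, nonneg_vec a -> 0 <= Ecoord G j F a.
Proof.
move=> F0 a a0; rewrite -(integral0 (G j) setT).
by apply: le_integral_on_nonneg => // t t0; exact/F0/nonneg_set_coord.
Qed.

Lemma EcoordDr_le (c : R) : (0 <= c)%R -> (forall a, nonneg_vec a -> 0 <= F a) ->
  forall a, nonneg_vec a -> Ecoord G j (fun b => F b + c%:E) a <= Ecoord G j F a + c%:E.
Proof.
move=> c0 F0 a a0; apply: integralDr_le => // t t0.
exact/F0/nonneg_set_coord.
Qed.

Lemma Ecoord_free_self : free_of j (Ecoord G j F).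
Proof. by move=> a t; apply: eq_integral => s _; rewrite set_coord2. Qed.

Lemma Ecoord_free l : free_of l F -> free_of l (Ecoord G j F).
Proof.
move=> Fl; have [<-|jl] := eqVneq j l; first exact: Ecoord_free_self.
by move=> a t; apply: eq_integral => s _; rewrite set_coordC// Fl.
Qed.

Lemma Ecoord_id : free_of j F -> Ecoord G j F = F.
Proof.
move=> Fj; apply/funext => a; rewrite /Ecoord.
under eq_integral do rewrite Fj.
by rewrite integral_cst// [X in (_ * X)%E]probability_setT mule1.
Qed.

End one_coordinate.

Definition Eiter (js : seq 'I_n) (F : vec R n -> \bar R) := foldr (Ecoord G) F js.

Lemma le_Eiter js (F F' : vec R n -> \bar R) :
  (forall a, nonneg_vec a -> F a <= F' a) ->
  forall a, nonneg_vec a -> Eiter js F a <= Eiter js F' a.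
Proof. by elim: js => //= j js IH FF'; apply: le_Ecoord; exact: IH. Qed.

Lemma Eiter_ge0 js (F : vec R n -> \bar R) :
  (forall a, nonneg_vec a -> 0 <= F a) ->
  forall a, nonneg_vec a -> 0 <= Eiter js F a.
Proof. by elim: js => //= j js IH F0; apply: Ecoord_ge0; exact: IH. Qed.

Lemma EiterDr_le js (F : vec R n -> \bar R) (c : R) :
  (0 <= c)%R -> (forall a, nonneg_vec a -> 0 <= F a) ->
  forall a, nonneg_vec a -> Eiter js (fun b => F b + c%:E) a <= Eiter js F a + c%:E.
Proof.
move=> c0 F0; elim: js => [|j js IH] a a0 //=.
apply: (@le_trans _ _ (Ecoord G j (fun b => Eiter js F b + c%:E) a)).
  exact: le_Ecoord.
by apply: EcoordDr_le => //; exact: Eiter_ge0.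
Qed.

Lemma Eiter_free_mem js (F : vec R n -> \bar R) l :
  l \in js -> free_of l (Eiter js F).
Proof.
elim: js => //= j js IH; rewrite inE => /predU1P[->|ljs].
  exact: Ecoord_free_self.
exact/Ecoord_free/IH.
Qed.

Lemma Eiter_id js (F : vec R n -> \bar R) :
  (forall l, l \in js -> free_of l F) -> Eiter js F = F.
Proof.
elim: js => //= j js IH Ffree; rewrite IH => [|l ljs]; last first.
  by apply: Ffree; rewrite inE ljs orbT.
by apply: Ecoord_id; apply: Ffree; rewrite mem_head.
Qed.

Let origin : vec R n := [tuple 0%R | _ < n].

Let nonneg_origin : nonneg_vec origin.
Proof. by move=> i; rewrite tnth_mktuple. Qed.

Lemma le_Eprod (F F' : vec R n -> \bar R) :
  (forall a, nonneg_vec a -> F a <= F' a) -> Eprod G F <= Eprod G F'.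
Proof. by move=> FF'; apply: le_Eiter. Qed.

Lemma EprodDr_le (F : vec R n -> \bar R) (c : R) : (0 <= c)%R ->
  (forall a, nonneg_vec a -> 0 <= F a) ->
  Eprod G (fun b => F b + c%:E) <= Eprod G F + c%:E.
Proof. by move=> c0 F0; apply: EiterDr_le. Qed.

Lemma Eprod_cst (c : \bar R) : Eprod G (fun=> c) = c.
Proof. by rewrite /Eprod -/(Eiter _ _) Eiter_id. Qed.

(* The coordinates [drop m (enum 'I_n)] are integrated out innermost by
   [Eprod], and integrating out a coordinate twice changes nothing. *)
Lemma Eprod_Eiter_drop m (F : vec R n -> \bar R) :
  Eprod G (Eiter (drop m (enum 'I_n)) F) = Eprod G F.
Proof.
have Eprod_cat H :
    Eprod G H = Eiter (take m (enum 'I_n)) (Eiter (drop m (enum 'I_n)) H) origin.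
  by rewrite /Eprod -{1}(cat_take_drop m (enum 'I_n)) foldr_cat.
rewrite !Eprod_cat [Eiter (drop _ _) (Eiter _ F)]Eiter_id// => l.
exact: Eiter_free_mem.
Qed.

End coordinate_expectation.

Section sum_of_largest.
Variable R : realDomainType.
Local Open Scope ring_scope.
Local Notation ger := (fun x y : R => y <= x).

Let ger_trans : transitive ger.
Proof. by move=> y x z /= yx zy; exact: le_trans zy yx. Qed.

Lemma sum_subseq_le_take (t v : seq R) : sorted ger t -> subseq v t ->
  \sum_(x <- v) x <= \sum_(x <- take (size v) t) x.
Proof.
elim: t v => [|x t IH] v; first by move=> _; rewrite subseq0 => /eqP ->.
move=> xt_sorted; have t_sorted := path_sorted xt_sorted.
have x_ge_t := order_path_min ger_trans xt_sorted.
case: v => [|y v]; first by rewrite !big_nil.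
rewrite /= [in X in X -> _]/subseq -/subseq.
case: eqP => [->|_] sub_v; first by rewrite !big_cons lerD2l; exact: IH.
apply: le_trans (IH _ t_sorted sub_v) _.
have vt : (size v < size t)%N by have := size_subseq sub_v.
rewrite (take_nth 0 vt) -cats1 big_cat /= !big_cons big_nil addr0 addrC lerD2r.
exact: (allP x_ge_t _ (mem_nth 0 vt)).
Qed.

Lemma le_sum_take (t : seq R) j m : (j <= m)%N -> (forall x, x \in t -> 0 <= x) ->
  \sum_(x <- take j t) x <= \sum_(x <- take m t) x.
Proof.
move=> jm t0; rewrite -(subnKC jm) takeD big_cat /= lerDl big_seq.
by apply: sumr_ge0 => x /mem_take /mem_drop; exact: t0.
Qed.

End sum_of_largest.

Section topsum.
Variable R : realType.
Local Open Scope ring_scope.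

Lemma topsum_ge0 (l : seq R) m : (forall x, x \in l -> 0 <= x) -> 0 <= topsum m l.
Proof.
move=> l0; rewrite /topsum big_seq; apply: sumr_ge0 => x /mem_take.
by rewrite mem_sort; exact: l0.
Qed.

Lemma sum_subseq_le_topsum (l u : seq R) m : subseq u l -> (size u <= m)%N ->
  (forall x, x \in l -> 0 <= x) -> \sum_(x <- u) x <= topsum m l.
Proof.
move=> ul um l0; rewrite /topsum.
have su : perm_eq (sort (fun x y : R => y <= x) u) u by rewrite perm_sort.
rewrite -(perm_big _ su).
have sorted_l := sort_sorted (fun x y : R => le_total y x) l.
have ul_sorted :=
  subseq_sort (fun x y : R => le_total y x) (fun _ _ _ yx zy => le_trans zy yx) ul.
apply: le_trans (sum_subseq_le_take sorted_l ul_sorted) _.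
rewrite size_sort; apply: le_sum_take => // x; rewrite mem_sort; exact: l0.
Qed.

Lemma count_enum_ord n (P : pred 'I_n) : count P (enum 'I_n) = (\sum_(i < n) P i)%N.
Proof.
by rewrite -sum1_count big_mkcond big_enum /=; apply: eq_bigr => i _; case: (P i).
Qed.

Variables (n m : nat) (f : 'I_n -> R) (P : pred 'I_n).
Hypotheses (f0 : forall i, 0 <= f i) (Pm : (\sum_(i < n) P i <= m)%N).

Lemma sum_le_topsum :
  \sum_(i < n | P i) f i <= topsum m [seq f i | i <- enum 'I_n].
Proof.
have -> : \sum_(i < n | P i) f i = \sum_(x <- [seq f i | i <- enum 'I_n & P i]) x.
  by rewrite big_map big_filter big_enum_cond.
apply: sum_subseq_le_topsum; first exact/map_subseq/filter_subseq.
  by rewrite size_map size_filter count_enum_ord.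
by move=> _ /mapP[i _ ->].
Qed.
End topsum.

Lemma sum_mul_indicator (R : pzSemiRingType) n (f : 'I_n -> R) (P : pred 'I_n) :
  (\sum_(i < n) f i * (P i)%:R = \sum_(i < n | P i) f i)%R.
Proof.
by rewrite [RHS]big_mkcond; apply: eq_bigr => i _; case: (P i); rewrite ?mulr1 ?mulr0.
Qed.

Lemma sum_le_sum_uniq (R : realDomainType) (n k : nat) (f : 'I_n -> R) (P : pred 'I_n) :
  (forall i, 0 <= f i)%R -> (\sum_(i < n) P i <= k)%N -> (k <= n)%N ->
  exists2 s : seq 'I_n, (size s == k) && uniq s &
    (\sum_(i < n | P i) f i <= \sum_(i <- s) f i)%R.
Proof.
move=> f0 Pk kn; set inP := [seq i <- enum 'I_n | P i].
set outP := [seq i <- enum 'I_n | ~~ P i].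
have size_inP : (size inP <= k)%N by rewrite size_filter count_enum_ord.
have size_in_outP : (size inP + size outP = n)%N.
  by rewrite !size_filter count_predC size_enum_ord.
exists (inP ++ take (k - size inP) outP).
  apply/andP; split.
    rewrite size_cat size_takel ?subnKC//.
    by rewrite leq_subLR size_in_outP.
  have uniq_enum := enum_uniq 'I_n.
  rewrite cat_uniq filter_uniq//=; apply/andP; split; last exact/take_uniq/filter_uniq.
  apply/hasPn => i /mem_take.
  by rewrite !mem_filter => /andP[/negbTE-> _].
by rewrite big_cat /= big_filter big_enum_cond lerDl sumr_ge0.
Qed.

Section GChange.
Variables (R : realType) (n k : nat) (G : 'I_n -> probability R R) (o : 'I_n -> R).
Hypotheses (k_gt0 : (0 < k)%N) (k_le_n : (k <= n)%N).
Hypothesis G_neg0 : forall i, G i [set t : R | t < 0]%R = 0.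
Hypothesis o_ge0 : forall i, (0 <= o i)%R.

Definition topk_ads (a : vec R n) : \bar R :=
  (topsum k [seq tnth a i | i <- enum 'I_n])%:E.

Lemma topk_ads_ge0 a : nonneg_vec a -> 0 <= topk_ads a.
Proof. by move=> a0; rewrite lee_fin topsum_ge0// => _ /mapP[i _ ->]. Qed.

(* Telescoping: [w 0 + R_0] is the expectation of [topk_ads] over [a_{i_1}],
   and [w s + R_s] the expectation over [a_{i_{s+1}}] of a maximum one of whose
   arguments is [w (s-1) + R_(s-1)]. *)
Lemma Eiter_topk_ads_le_w (I : seq 'I_n) (d : 'I_n) s : (s < size I)%N ->
  forall a, nonneg_vec a ->
  Eiter G (rev (take s.+1 I)) topk_ads a <= w k G o I d s a + (Rt k o I s a)%:E.
Proof.
elim: s => [|s IH] sI a a0.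
  by case: I sI => [//|i0 I] _ /=; rewrite -addeA -EFinD addNr adde0 take0.
rewrite (take_nth d sI) rev_rcons /= -addeA -EFinD addNr adde0.
apply: le_Ecoord => // b b0; apply: le_trans (IH (ltnW sI) b b0) _.
by rewrite le_max lexx orbT.
Qed.

Lemma Rt_last (I : seq 'I_n) b :
  Rt k o I k.-1 b = (\sum_(i <- take k.-1 I) o i)%R.
Proof. by rewrite /Rt prednK// subnn /topsum take0 big_nil addr0. Qed.

Lemma sum_le_OBJ_GChangeI (I : seq 'I_n) : I != [::] ->
  (\sum_(i <- I) o i)%:E <= OBJ_GChangeI k G o I.
Proof.
case: I => [//|d I] _; rewrite -[X in X <= _](Eprod_cst G).
by apply: le_Eprod => // b _; rewrite le_max lexx.
Qed.

(* This list consists of the k coordinates that [Eprod] integrates out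
   innermost, so that no exchange of integrals is needed. *)
Lemma Etopk_ads_le_OBJ_GChangeI :
  Eprod G topk_ads <= OBJ_GChangeI k G o (rev (drop (n - k) (enum 'I_n))).
Proof.
set I := rev _; have sizeI : size I = k.
  by rewrite size_rev size_drop size_enum_ord subKn.
rewrite -(Eprod_Eiter_drop G (n - k)) -[drop _ _]revK -/I.
rewrite -[I in rev I](take_size I) sizeI.
case: I sizeI => [|d I'] sizeI; first by move: k_gt0; rewrite -sizeI.
have chain := @Eiter_topk_ads_le_w (d :: I') d k.-1; rewrite prednK// sizeI in chain.
apply: le_Eprod => // b b0; apply: le_trans (chain (ltnSn _) b b0) _.
by rewrite Rt_last le_max lexx orbT.
Qed.

Lemma le_OBJ_GChange (I : seq 'I_n) : size I == k -> uniq I ->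
  OBJ_GChangeI k G o I <= OBJ_GChange k G o.
Proof.
by move=> sizeI uI; exact: (@le_bigmax_cond _ _ _ _ (Tuple sizeI) (fun J : k.-tuple 'I_n => uniq J)).
Qed.

Lemma value_le_topk_ads_add (x y : 'I_n -> vec R n -> bool) a (c : R) :
  (\sum_(i < n) (x i a + y i a) <= k)%N -> nonneg_vec a ->
  (forall s : seq 'I_n, size s == k -> uniq s -> (\sum_(i <- s) o i <= c)%R) ->
  (\sum_(i < n) (tnth a i * (x i a)%:R + o i * (y i a)%:R))%R%:E <= topk_ads a + c%:E.
Proof.
move=> slots a0 c_ub; rewrite -EFinD lee_fin big_split !sum_mul_indicator /=.
apply: lerD; first apply: sum_le_topsum => //.
  by apply: leq_trans slots; apply: leq_sum => i _; exact: leq_addr.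
have [|s /andP[sk us] le_s] := sum_le_sum_uniq (P := y^~ a) o_ge0 _ k_le_n.
  by apply: leq_trans slots; apply: leq_sum => i _; exact: leq_addl.
exact: le_trans le_s (c_ub s sk us).
Qed.

Lemma OBJ_le_Etopk_ads_add (x y : 'I_n -> vec R n -> bool) (c : R) :
  feasible k x y -> (0 <= c)%R ->
  (forall s : seq 'I_n, size s == k -> uniq s -> (\sum_(i <- s) o i <= c)%R) ->
  OBJ G o x y <= Eprod G topk_ads + c%:E.
Proof.
move=> [slots _ _ _ _] c0 c_ub.
apply: le_trans (EprodDr_le G_neg0 c0 topk_ads_ge0).
by apply: le_Eprod => // a a0; exact: value_le_topk_ads_add.
Qed.

End GChange.

Theorem theorem6 (R : realType) (n k : nat) (G : 'I_n -> probability R R)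
  (o : 'I_n -> R) :
  (0 < k)%N -> (k <= n)%N ->
  (forall i, G i [set t : R | t < 0]%R = 0) ->
  (forall i, (0 <= o i)%R) ->
  forall x y : 'I_n -> vec R n -> bool,
    feasible k x y ->
    OBJ G o x y <= 2%:E * OBJ_GChange k G o.
Proof.
move=> k_gt0 k_le_n G_neg0 o_ge0 x y xy_feasible.
pose I0 := rev (drop (n - k) (enum 'I_n)).
have sizeI0 : size I0 == k by rewrite size_rev size_drop size_enum_ord subKn.
have uniqI0 : uniq I0 by rewrite rev_uniq drop_uniq// enum_uniq.
have Etopk_le : Eprod G (topk_ads k) <= OBJ_GChange k G o.
  apply: le_trans (le_OBJ_GChange G o sizeI0 uniqI0).
  exact: Etopk_ads_le_OBJ_GChangeI.
have organic_le s :
    size s == k -> uniq s -> (\sum_(i <- s) o i)%:E <= OBJ_GChange k G o.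
  move=> sk us; apply: le_trans (le_OBJ_GChange G o sk us).
  apply: (sum_le_OBJ_GChangeI k o G_neg0); apply: contraTneq sk => ->.
  by rewrite /= eq_sym -lt0n.
have : 0 <= OBJ_GChange k G o.
  by apply: le_trans (organic_le _ sizeI0 uniqI0); rewrite lee_fin sumr_ge0.
move: Etopk_le organic_le.
case: (OBJ_GChange k G o) => [c | |] // Etopk_le organic_le c0.
  rewrite lee_fin in c0.
  apply: le_trans (OBJ_le_Etopk_ads_add k_le_n G_neg0 o_ge0 xy_feasible c0 _) _.
    by move=> s sk us; rewrite -lee_fin; exact: organic_le.
  by rewrite -EFinM mulr2n mulrDl mul1r EFinD leeD2r.
by rewrite gt0_muley ?lte_fin// leey.
Qed.
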